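(* Let $\mathcal{P}$ be a Yao-Yao partition of $\mathbb{R}^n$ whose center is $0$. Then $\mathcal{P}^*:=\{A^* : A\in\mathcal{P}\}$ is also a partition of $\mathbb{R}^n$, where for a set $C\subseteq\mathbb{R}^n$, $C^*=\{y\in\mathbb{R}^n : x\cdot y\geq 0 \text{ for all } x\in C\}$.
   Context: $x\cdot y$ is the standard scalar product on $\mathbb{R}^n$. A set $\mathcal{P}$ of subsets of an affine space $E$ is a partition of $E$ if $\bigcup\mathcal{P}=E$ and the interiors of two distinct elements of $\mathcal{P}$ do not intersect. Yao-Yao partitions and their centers are defined by induction on the dimension of a finite-dimensional real affine space $E$ (with associated vector space $\vec{E}$): if $E=\{c\}$ has dimension $0$, then $\{\{c\}\}$ is a Yao-Yao partition of $E$ with center $c$. If $E$ has dimension $n\geq 1$, $\mathcal{P}$ is a Yao-Yao partition of $E$ if there exist an affine hyperplane $F$ of $E$, a vector $v\in\vec{E}\setminus\vec{F}$, and two Yao-Yao partitions $\mathcal{P}_+$, $\mathcal{P}_-$ of $F$ having the same center $c$, such that $\mathcal{P}=\{A+\mathbb{R}_- v : A\in\mathcal{P}_-\}\cup\{A+\mathbb{R}_+ v : A\in\mathcal{P}_+\}$; the center of $\mathcal{P}$ is then $c$. *)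

From HB Require Import structures.
From mathcomp Require Import all_boot all_order all_algebra.
From mathcomp Require Import all_classical all_reals all_analysis.
Set Implicit Arguments. Unset Strict Implicit. Unset Printing Implicit Defensive.
Import Order.TTheory GRing.Theory Num.Theory.
Import numFieldNormedType.Exports.
Local Open Scope classical_set_scope.
Local Open Scope ring_scope.

Section YaoYao.
Variables (R : realType) (n : nat).
Notation vec := 'rV[R]_n.

Definition dotp (x y : vec) : R := \sum_(i < n) x 0 i * y 0 i.

Definition dual_cone (C : set vec) : set vec :=
  [set y | forall x, C x -> 0 <= dotp x y].

Definition is_partition (E : set vec) (P : set (set vec)) : Prop :=
  \bigcup_(A in P) A = E /\
  forall A B, P A -> P B -> A <> B -> interior A `&` interior B = set0.

Definition aff (c0 : vec) (V : 'M[R]_n) : set vec :=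
  [set c0 + u | u in [set u : vec | (u <= V)%MS]].

Definition ray_neg (A : set vec) (v : vec) : set vec :=
  [set a + t *: v | a in A & t in [set t : R | t <= 0]].
Definition ray_pos (A : set vec) (v : vec) : set vec :=
  [set a + t *: v | a in A & t in [set t : R | 0 <= t]].

(* YY E P c : P is a Yao-Yao partition of the affine subspace E of R^n with
   center c (inductive definition on the dimension of E) *)
Inductive YY : set vec -> set (set vec) -> vec -> Prop :=
| YY0 (c : vec) : YY [set c] [set [set c]] c
| YYS (c0 : vec) (V : 'M[R]_n) (w : vec) (W : 'M[R]_n) (v : vec)
      (Pm Pp : set (set vec)) (c : vec) :
    (0 < \rank V)%N ->
    (W <= V)%MS -> \rank W = (\rank V).-1 ->     (* F = aff w W hyperplane of E *)
    (w - c0 <= V)%MS ->                          (* F is contained in E *)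
    (v <= V)%MS -> ~~ (v <= W)%MS ->             (* v in vec E \ vec F *)
    YY (aff w W) Pm c -> YY (aff w W) Pp c ->
    YY (aff c0 V)
       ([set B | exists2 A, Pm A & B = ray_neg A v] `|`
        [set B | exists2 A, Pp A & B = ray_pos A v]) c.

End YaoYao.

(* Every member of a Yao-Yao partition contains the center, so when the center
   is 0 the dual of A + R_+ v is A^* cut by the half-space {y | v.y >= 0}, and
   dually for A + R_- v.  By induction the duals therefore cover R^n: pick the
   side of y with respect to v, then a dual from the partition of the
   hyperplane.  Two duals on the same side have disjoint interiors because
   their parent duals do; two duals on opposite sides lie in opposite closed
   half-spaces, and the interior of a set contained in {v.y >= 0} lies in the
   open half-space {v.y > 0}. *)
From mathcomp Require Import all_boot all_order all_algebra.
From mathcomp Require Import all_classical all_reals all_analysis.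
From mathcomp Require Import ring.
Set Implicit Arguments. Unset Strict Implicit. Unset Printing Implicit Defensive.
Local Open Scope classical_set_scope.
Local Open Scope ring_scope.
Import Order.TTheory GRing.Theory Num.Theory.
Import numFieldNormedType.Exports.

Lemma interiorI_disjoint (T : topologicalType) (A B H : set T) :
  interior A `&` interior B = set0 ->
  interior (A `&` H) `&` interior (B `&` H) = set0.
Proof.
move=> disAB; apply/seteqP; split => // y [yA yB]; rewrite -disAB.
split; first exact: interiorS (@subIsetl _ _ H) _ yA.
exact: interiorS (@subIsetl _ _ H) _ yB.
Qed.

Section ScalarProduct.
Variables (R : realType) (n : nat).
Local Notation vec := 'rV[R]_n.

Lemma dotpC (x y : vec) : dotp x y = dotp y x.
Proof. by apply: eq_bigr => i _; rewrite mulrC. Qed.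

Lemma dotpDl (x z y : vec) : dotp (x + z) y = dotp x y + dotp z y.
Proof. by rewrite /dotp -big_split; apply: eq_bigr => i _; rewrite mxE mulrDl. Qed.

Lemma dotpZl t (x y : vec) : dotp (t *: x) y = t * dotp x y.
Proof. by rewrite /dotp mulr_sumr; apply: eq_bigr => i _; rewrite mxE mulrA. Qed.

Lemma dotp0l (y : vec) : dotp 0 y = 0.
Proof. by rewrite -(scale0r 0) dotpZl mul0r. Qed.

Lemma dotpNl (x y : vec) : dotp (- x) y = - dotp x y.
Proof. by rewrite -scaleN1r dotpZl mulN1r. Qed.

Lemma dotp_gt0 (v : vec) : v != 0 -> 0 < dotp v v.
Proof.
move=> v0; have [i vi0] : exists i, v 0 i != 0.
  apply/existsP; apply: contraNT v0 => /existsPn vi0.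
  by apply/eqP/rowP => i; rewrite mxE; exact/eqP/negPn.
have sq_ge0 j : 0 <= v 0 j * v 0 j by rewrite -expr2 sqr_ge0.
rewrite /dotp (bigD1 i) //= ltr_pwDl ?sumr_ge0 //.
by rewrite -expr2 exprn_even_gt0.
Qed.

End ScalarProduct.

Section DualCones.
Variables (R : realType) (n : nat).
Local Notation vec := 'rV[R]_n.

Definition halfspace_ge0 (v : vec) : set vec := [set y | 0 <= dotp v y].
Definition halfspace_le0 (v : vec) : set vec := [set y | dotp v y <= 0].

Lemma dual_ray_pos (A : set vec) v : A 0 ->
  dual_cone (ray_pos A v) = dual_cone A `&` halfspace_ge0 v.
Proof.
move=> A0; apply/seteqP; split => y.
  move=> Hy; split => [a Aa|].
    by apply: Hy; exists a => //; exists 0 => //=; rewrite scale0r addr0.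
  by apply: Hy; exists 0 => //; exists 1 => //=; rewrite scale1r add0r.
move=> [HA Hv] _ [a Aa [t /= t0 <-]]; rewrite dotpDl dotpZl.
by apply: addr_ge0; [exact: HA | exact: mulr_ge0].
Qed.

Lemma dual_ray_neg (A : set vec) v : A 0 ->
  dual_cone (ray_neg A v) = dual_cone A `&` halfspace_le0 v.
Proof.
move=> A0; apply/seteqP; split => y.
  move=> Hy; split => [a Aa|].
    by apply: Hy; exists a => //; exists 0 => //=; rewrite scale0r addr0.
  have : 0 <= dotp (0 + (-1) *: v) y.
    by apply: Hy; exists 0 => //; exists (-1) => //=; rewrite lerN10.
  by rewrite /halfspace_le0 /= add0r scaleN1r dotpNl oppr_ge0.
move=> [HA Hv] _ [a Aa [t /= t0 <-]]; rewrite dotpDl dotpZl.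
by apply: addr_ge0; [exact: HA | exact: mulr_le0].
Qed.

(* Moving from y by - t v with t = e / (2 |v|) stays in the e-ball around y
   and decreases v.y by t (v.v) > 0. *)
Lemma interior_halfspace_ge0 (S : set vec) v y : v != 0 ->
  S `<=` halfspace_ge0 v -> interior S y -> 0 < dotp v y.
Proof.
move=> v0 Sv /nbhs_ballP [e e0 ball_yS].
have nv0 : 0 < `|v| by rewrite normr_gt0.
pose t := e / (`|v| * 2).
have t0 : 0 < t by rewrite divr_gt0 // mulr_gt0.
have : S (y + (- t) *: v).
  apply: ball_yS; rewrite -ball_normE /ball_ /= opprD addrA subrr add0r.
  rewrite normrN normrZ normrN gtr0_norm //.
  have -> : t * `|v| = e / 2 by rewrite /t; field; rewrite gt_eqF.
  by rewrite ltr_pdivrMr // ltr_pMr // ltr1n.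
move=> /Sv; rewrite /halfspace_ge0 /= dotpC dotpDl dotpZl dotpC mulNr subr_ge0.
by apply: lt_le_trans; rewrite mulr_gt0 // dotp_gt0.
Qed.

Lemma interior_halfspaces_disjoint (S T : set vec) v : v != 0 ->
  S `<=` halfspace_ge0 v -> T `<=` halfspace_le0 v ->
  interior S `&` interior T = set0.
Proof.
move=> v0 Sv Tv; apply/seteqP; split => // y [Sy Ty].
have vy_gt0 := interior_halfspace_ge0 v0 Sv Sy.
have : 0 < dotp (- v) y.
  apply: interior_halfspace_ge0 Ty; first by rewrite oppr_eq0.
  by move=> z /Tv; rewrite /halfspace_ge0 /= dotpNl oppr_ge0.
by rewrite dotpNl oppr_gt0 => /lt_trans/(_ vy_gt0); rewrite ltxx.
Qed.

End DualCones.

Section YaoYaoDuals.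
Variables (R : realType) (n : nat).
Local Notation vec := 'rV[R]_n.

Lemma YY_center_mem E P (c : vec) : YY E P c -> forall A, P A -> A c.
Proof.
elim=> [c' A -> // | c0 V w W v Pm Pp c' _ _ _ _ _ _ _ Pm_c _ Pp_c].
by move=> B [[A PmA ->] | [A PpA ->]]; exists c';
  [exact: Pm_c | | exact: Pp_c |]; exists 0 => //=; rewrite scale0r addr0.
Qed.

Lemma YY_dual_cover E P (c : vec) : YY E P c -> c = 0 ->
  forall y, exists2 A, P A & dual_cone A y.
Proof.
elim=> [c' -> y | c0 V w W v Pm Pp c1 _ _ _ _ _ _ YYm covm YYp covp c1_eq0 y].
  by exists [set 0] => // x ->; rewrite dotp0l.
subst c1; have [vy_ge0 | vy_lt0] := leP 0 (dotp v y).
  have [A PpA Ay] := covp erefl y; exists (ray_pos A v); first by right; exists A.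
  by rewrite dual_ray_pos //; exact: YY_center_mem YYp _ PpA.
have [A PmA Ay] := covm erefl y; exists (ray_neg A v); first by left; exists A.
rewrite dual_ray_neg; last exact: YY_center_mem YYm _ PmA.
by split => //; exact: ltW.
Qed.

Lemma YY_dual_interiors_disjoint E P (c : vec) : YY E P c -> c = 0 ->
  forall A B, P A -> P B -> A <> B ->
  interior (dual_cone A) `&` interior (dual_cone B) = set0.
Proof.
elim=> [c' _ A B -> -> [] //
       | c0 V w W v Pm Pp c1 _ _ _ _ _ vW YYm dism YYp disp c1_eq0].
subst c1; have v0 : v != 0 by apply: contraNneq vW => ->; exact: sub0mx.
have opposite A1 A2 : Pm A1 -> Pp A2 ->
    interior (dual_cone (ray_neg A1 v)) `&` interior (dual_cone (ray_pos A2 v))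
    = set0.
  move=> PmA1 PpA2; rewrite setIC dual_ray_pos ?dual_ray_neg;
    [| exact: YY_center_mem YYm _ PmA1 | exact: YY_center_mem YYp _ PpA2].
  by apply: interior_halfspaces_disjoint v0 _ _ => y [].
move=> _ _ [[A1 P1 ->] | [A1 P1 ->]] [[A2 P2 ->] | [A2 P2 ->]] neq.
- have A12 : A1 <> A2 by move=> eqA; apply: neq; rewrite eqA.
  rewrite !dual_ray_neg; [ | exact: YY_center_mem YYm _ P2
                           | exact: YY_center_mem YYm _ P1].
  exact/interiorI_disjoint/(dism erefl _ _ P1 P2 A12).
- exact: opposite.
- by rewrite setIC; exact: opposite.
- have A12 : A1 <> A2 by move=> eqA; apply: neq; rewrite eqA.
  rewrite !dual_ray_pos; [ | exact: YY_center_mem YYp _ P2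
                           | exact: YY_center_mem YYp _ P1].
  exact/interiorI_disjoint/(disp erefl _ _ P1 P2 A12).
Qed.

End YaoYaoDuals.

Theorem mainTheorem2 (R : realType) (n : nat) (P : set (set 'rV[R]_n)) :
  YY [set: 'rV[R]_n] P 0 ->
  is_partition [set: 'rV[R]_n] [set dual_cone C | C in P].
Proof.
move=> YYP; split.
  apply/seteqP; split => // y _.
  have [A PA Ay] := YY_dual_cover YYP erefl y.
  by exists (dual_cone A) => //; exists A.
move=> _ _ [A PA <-] [B PB <-] neq.
apply: YY_dual_interiors_disjoint YYP erefl _ _ PA PB _.
by move=> eqAB; apply: neq; rewrite eqAB.
Qed.
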